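(* Let $m\in\mathbb{N}$, let $f_1,\dots,f_m\in C[0,1]$, and let $\mathcal{R}'$ be the ring of functions $x\mapsto p(f_1(x),\dots,f_m(x))$ where $p$ ranges over polynomials in $m$ variables with real coefficients. Then for every $r'\in\mathcal{R}'$, $$\overline{\dim}_B G(r')\le \max\{\overline{\dim}_B G(f_1),\dots,\overline{\dim}_B G(f_m)\}.$$
   Context: $C[0,1]$ is the space of real-valued continuous functions on $[0,1]$; $G(h)=\{(x,h(x)):x\in[0,1]\}\subset\mathbb{R}^2$ is the graph of $h$. For a nonempty bounded set $F$, $N_\delta(F)$ is the smallest number of sets of diameter at most $\delta$ covering $F$, and $\overline{\dim}_B F=\limsup_{\delta\to0}\frac{\log N_\delta(F)}{-\log\delta}$. *)

From HB Require Import structures.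
From mathcomp Require Import all_boot all_order all_algebra.
From mathcomp Require Import all_classical all_reals all_analysis.
From mathcomp Require mpoly.
Set Implicit Arguments. Unset Strict Implicit. Unset Printing Implicit Defensive.
Import Order.TTheory GRing.Theory Num.Theory.
Import numFieldNormedType.Exports.
Local Open Scope classical_set_scope.
Local Open Scope ring_scope.

Section BoxDim.
Variable R : realType.

Definition dist2 (p q : R * R) : R :=
  Num.sqrt ((p.1 - q.1) ^+ 2 + (p.2 - q.2) ^+ 2).

Definition diam_le (A : set (R * R)) (d : R) : Prop :=
  forall p q, A p -> A q -> dist2 p q <= d.

Definition coverable (F : set (R * R)) (d : R) (n : nat) : Prop :=
  exists A : nat -> set (R * R),
    (forall i, (i < n)%N -> diam_le (A i) d) /\
    (forall p, F p -> exists2 i, (i < n)%N & A i p).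

Definition Ndelta (F : set (R * R)) (d : R) : \bar R :=
  ereal_inf [set (n%:R)%:E | n in coverable F d].

Definition box_ratio (F : set (R * R)) (d : R) : \bar R :=
  match Ndelta F d with
  | EFin N => (ln N / (- ln d))%:E
  | +oo%E => +oo%E
  | -oo%E => -oo%E
  end.

Definition upper_box_dim (F : set (R * R)) : \bar R :=
  limf_esup (box_ratio F) (0%R^'+).

Definition graph (h : R -> R) : set (R * R) :=
  [set (x, h x) | x in `[0, 1]].

End BoxDim.

(* Cut [0, 1] into columns of width δ/2 and fix coverings of the graphs G(f_i) by
   sets of diameter δ.  By the intermediate value theorem, the oscillation of f_i on a
   column is at most δ times the number of covering sets that meet G(f_i) above that
   column.  On the compact range of (f_1, ..., f_m) the polynomial p is Lipschitz, so
   the oscillation of r = p(f_1, ..., f_m) on column j is at most K δ S_j, where S_j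
   counts all covering sets meeting some G(f_i) above column j; hence G(r) above the
   column is covered by (4K + 1) S_j squares.  A set of diameter δ meets at most seven
   columns, so N_δ(G(r)) <= 7 (4K + 1) m max_i N_δ(G(f_i)), and the constant factor
   vanishes in log N_δ / - log δ as δ -> 0. *)

From HB Require Import structures.
From mathcomp Require Import all_boot all_order all_algebra.
From mathcomp Require Import all_classical all_reals all_analysis.
From mathcomp Require Import zify ring lra.
From mathcomp Require mpoly.
Set Implicit Arguments.
Unset Strict Implicit.
Unset Printing Implicit Defensive.
Import Order.TTheory GRing.Theory Num.Theory.
Import numFieldNormedType.Exports.
Local Open Scope classical_set_scope.
Local Open Scope ring_scope.

Section Coverings.
Variable R : realType.
Implicit Types (F G : set (R * R)) (d : R).

Lemma coverable_leq F d n n' : (n <= n')%N -> coverable F d n -> coverable F d n'.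
Proof.
move=> nn' [A [HA HF]].
exists (fun i => if (i < n)%N then A i else set0); split.
  by move=> i _; case: ifP => [/HA //|_ p q []].
move=> p /HF [i ni Ai]; exists i; first exact: leq_trans nn'.
by rewrite ni.
Qed.

Lemma coverableS F G d n : F `<=` G -> coverable G d n -> coverable F d n.
Proof. by move=> FG [A [HA HG]]; exists A; split => // p /FG /HG. Qed.

Lemma coverable0 d : coverable set0 d 0.
Proof. by exists (fun _ => set0); split => // p []. Qed.

Lemma coverableU F G d n1 n2 : coverable F d n1 -> coverable G d n2 ->
  coverable (F `|` G) d (n1 + n2).
Proof.
move=> [A [HA HF]] [B [HB HG]].
exists (fun i => if (i < n1)%N then A i else B (i - n1)%N); split.
  move=> i lti; case: ifP => [/HA //|/negbT]; rewrite -leqNgt => ni.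
  by apply: HB; lia.
move=> p [/HF [i ni Ai]|/HG [i ni Bi]].
  by exists i; [lia | rewrite ni].
by exists (i + n1)%N; [lia | rewrite ifF ?addnK //; lia].
Qed.

Lemma coverable_bigcup (P : nat -> set (R * R)) (c : nat -> nat) d J :
  (forall j, (j < J)%N -> coverable (P j) d (c j)) ->
  coverable [set z | exists2 j, (j < J)%N & P j z] d (\sum_(j < J) c j)%N.
Proof.
elim: J => [|J IH] HP.
  by rewrite big_ord0; apply: coverableS (coverable0 d) => p [j].
rewrite big_ord_recr /=.
apply: (@coverableS _ ([set z | exists2 j, (j < J)%N & P j z] `|` P J)).
  move=> z [j]; rewrite ltnS leq_eqVlt => /orP[/eqP->|jJ] Pz; first by right.
  by left; exists j.
by apply: coverableU; [apply: IH => j jJ; apply: HP; lia | exact: HP].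
Qed.

Lemma coverable_graph_gt0 (h : R -> R) d N : coverable (graph h) d N -> (0 < N)%N.
Proof.
move=> [A [_ HF]].
have [|k kN _] := HF (0, h 0); first by exists 0 => //=; rewrite in_itv /= lexx ler01.
exact: leq_ltn_trans kN.
Qed.

Lemma dist2_ge_fst (p q : R * R) : `|p.1 - q.1| <= dist2 p q.
Proof. by rewrite /dist2 -sqrtr_sqr ler_wsqrtr // lerDl sqr_ge0. Qed.

Lemma dist2_ge_snd (p q : R * R) : `|p.2 - q.2| <= dist2 p q.
Proof. by rewrite /dist2 -sqrtr_sqr ler_wsqrtr // lerDr sqr_ge0. Qed.

Lemma dist2_le (p q : R * R) e : `|p.1 - q.1| <= e -> `|p.2 - q.2| <= e ->
  dist2 p q <= 2 * e.
Proof.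
move=> h1 h2; have e0 : 0 <= e := le_trans (normr_ge0 _) h1.
rewrite /dist2 -(ger0_norm (_ : 0 <= 2 * e)) ?mulr_ge0 // -sqrtr_sqr ler_wsqrtr //.
rewrite -(real_normK (num_real (p.1 - q.1))) -(real_normK (num_real (p.2 - q.2))).
have := normr_ge0 (p.1 - q.1); have := normr_ge0 (p.2 - q.2).
move: h1 h2; set a := `|_|; set b := `|_|; rewrite !expr2; nra.
Qed.

End Coverings.

Section Columns.
Variable R : realType.

Lemma itv_grid_cell (lo e t : R) (N : nat) : 0 < e -> lo <= t <= lo + N%:R * e ->
  exists2 k, (k <= N)%N & lo + k%:R * e <= t <= lo + k.+1%:R * e.
Proof.
move=> e0; elim: N => [|N IH] /andP[t_ge t_le].
  by exists 0%N => //; rewrite mul0r addr0 t_ge /= mul1r; lra.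
have [tN|tN] := leP t (lo + N%:R * e).
  by have [|k kN Hk] := IH; [rewrite t_ge tN | exists k => //; lia].
by exists N => //; rewrite (ltW tN) t_le.
Qed.

Lemma sum_predD1 (P : pred nat) i0 n : (i0 < n)%N -> P i0 ->
  (\sum_(i < n) P i = (\sum_(i < n) (P i && (i != i0 :> nat))).+1)%N.
Proof.
elim: n => [//|n IH] i0n Pi0; rewrite !big_ord_recr /=.
have [Ei0|ne] := eqVneq i0 n.
  subst i0; rewrite Pi0 /= addn0 addn1; congr _.+1.
  by apply: eq_bigr => i _; rewrite (ltn_eqF (ltn_ord i)) andbT.
by rewrite IH ?ltn_neqAle ?ne -1?ltnS //= andbT addSn.
Qed.

Lemma interval_cover_length (δ a b : R) n (B : nat -> set R) (P : pred nat) :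
  0 <= δ -> (forall i u v, (i < n)%N -> P i -> B i u -> B i v -> `|u - v| <= δ) ->
  a <= b -> (forall t, a <= t <= b -> exists i, [/\ (i < n)%N, P i & B i t]) ->
  b - a <= (\sum_(i < n) P i)%:R * δ.
Proof.
move=> d0; move Hk : (\sum_(i < n) P i)%N => k.
elim: k P Hk a => [|k IH] P Hk a Hd ab Hc.
  have [|i [i_n Pi _]] := Hc a; first by rewrite lexx ab.
  by move: Hk; rewrite (sum_predD1 i_n Pi).
have [|i0 [i0n Pi0 Bi0]] := Hc a; first by rewrite lexx ab.
have Hk' : (\sum_(i < n) (P i && (i != i0 :> nat)))%N = k.
  by move: Hk; rewrite (sum_predD1 i0n Pi0) => -[].
(* the set covering [a] cannot reach beyond [a + δ] *)
have right_part a' : a + δ < a' <= b -> b - a' <= k%:R * δ.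
  move=> /andP[a'_gt a'_le].
  apply: (IH (fun i => P i && (i != i0 :> nat)) Hk' a' _ a'_le).
    by move=> i u v i_n /andP[Pi _]; apply: Hd.
  move=> t /andP[t_ge t_le].
  have [|i [i_n Pi Bi]] := Hc t; first by rewrite t_le andbT; lra.
  exists i; split => //; rewrite Pi /=; apply/eqP => ii0; subst i.
  by have := Hd _ _ _ i0n Pi0 Bi Bi0; rewrite ger0_norm; lra.
rewrite -natr1 mulrDl mul1r.
have k0 : 0 <= k%:R * δ by apply: mulr_ge0.
have [too_long|//] := ltP (k%:R * δ + δ) (b - a).
set x := b - a - δ - k%:R * δ.
by have := right_part (a + δ + x / 2); rewrite /x; lra.
Qed.

Lemma sum_nat_window (lo hi J : nat) :
  (\sum_(j < J) ((lo <= j) && (j < hi))%N <= hi - lo)%N.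
Proof.
suff -> : (\sum_(j < J) ((lo <= j) && (j < hi))%N = minn J hi - minn J lo)%N by lia.
elim: J => [|J IH]; first by rewrite big_ord0; lia.
by rewrite big_ord_recr /= IH; case: (leqP lo J); case: (ltnP J hi) => /=; lia.
Qed.

Definition column (w : R) (j : nat) (x : R) := j%:R * w <= x <= j.+1%:R * w.

Definition graph_column (h : R -> R) (w : R) (j : nat) : set (R * R) :=
  [set z | exists y, [/\ 0 <= y <= 1, column w j y & z = (y, h y)]].

Definition column_count (h : R -> R) (A : nat -> set (R * R)) (n : nat) w j :=
  (\sum_(k < n) `[< graph_column h w j `&` A k !=set0 >])%N.

Lemma graph_sub_columns (h : R -> R) (w : R) : 0 < w ->
  exists J, graph h `<=` [set z | exists2 j, (j < J)%N & graph_column h w j z].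
Proof.
move=> w0; exists (Num.truncn w^-1).+2 => _ [x /= x01 <-].
move: x01; rewrite in_itv /= => /andP[x0 x1].
have [|j jJ hj] := @itv_grid_cell 0 w x (Num.truncn w^-1).+1 w0.
  rewrite add0r x0 /=; apply: le_trans x1 _.
  by rewrite -ler_pdivrMr // div1r ltW // truncnS_gt.
by rewrite !add0r in hj; exists j => //; exists x; rewrite x0 x1.
Qed.

Lemma column_count_gt0 (h : R -> R) (A : nat -> set (R * R)) n w j y :
  (forall p, graph h p -> exists2 k, (k < n)%N & A k p) ->
  0 <= y <= 1 -> column w j y -> (0 < column_count h A n w j)%N.
Proof.
move=> covA y01 cy.
have [|k kn Ak] := covA (y, h y); first by exists y => //=; rewrite in_itv.
rewrite /column_count (bigD1 (Ordinal kn)) //= asboolT //.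
by exists (y, h y); split => //; exists y.
Qed.

Lemma diam_le_column_meets (h : R -> R) (A : set (R * R)) w J :
  0 < w -> diam_le A (2 * w) ->
  (\sum_(j < J) `[< graph_column h w j `&` A !=set0 >] <= 7)%N.
Proof.
move=> w0 HA.
have close j j0 z z0 : (graph_column h w j `&` A) z ->
    (graph_column h w j0 `&` A) z0 -> (j <= j0 + 3)%N.
  move=> [[x [_ /andP[cx _] ->]] Ax] [[x0 [_ /andP[_ cx0] ->]] Ax0].
  have dx : x - x0 <= 2 * w.
    have := le_trans (dist2_ge_fst _ _) (HA _ _ Ax Ax0) => /= dx.
    exact: le_trans (ler_norm _) dx.
  rewrite -(ler_nat R) -(ler_pM2r w0) natrD mulrDl.
  by rewrite -natr1 mulrDl mul1r in cx0; lra.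
have [[j0 [_ [z0 Hz0]]]|none] :=
    pselect (exists j0, (j0 < J)%N /\ graph_column h w j0 `&` A !=set0).
  apply: (@leq_trans (\sum_(j < J) ((j0 - 3 <= j) && (j < j0 + 4))%N)).
    apply: leq_sum => j _; case: asboolP => // -[z Hz].
    by have := close _ _ _ _ Hz Hz0; have := close _ _ _ _ Hz0 Hz; lia.
  by apply: leq_trans (sum_nat_window _ _ _) _; lia.
rewrite big1 // => j _; case: asboolP => // hj.
by case: none; exists j.
Qed.

Lemma column_oscillation (h : R -> R) (w : R) n (A : nat -> set (R * R)) j x x' :
  {within `[0, 1], continuous h} -> 0 < w ->
  (forall k, (k < n)%N -> diam_le (A k) (2 * w)) ->
  (forall p, graph h p -> exists2 k, (k < n)%N & A k p) ->
  0 <= x <= 1 -> 0 <= x' <= 1 -> column w j x -> column w j x' ->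
  `|h x - h x'| <= (column_count h A n w j)%:R * (2 * w).
Proof.
move=> hc w0 HA covA.
wlog xx' : x x' / x <= x'.
  move=> wlog_le x01 x'01 cx cx'; case: (leP x x') => [le|/ltW le].
    exact: wlog_le.
  by rewrite distrC; apply: wlog_le.
move=> /andP[x0 x1] /andP[x'0 x'1] /andP[cx _] /andP[_ cx'].
pose B k := [set z.2 | z in graph_column h w j `&` A k].
have Bdiam k u v : (k < n)%N -> `[< graph_column h w j `&` A k !=set0 >] ->
    B k u -> B k v -> `|u - v| <= 2 * w.
  move=> kn _ [z [_ Az] <-] [z' [_ Az'] <-].
  exact: le_trans (dist2_ge_snd z z') (HA k kn _ _ Az Az').
have cover t : Num.min (h x) (h x') <= t <= Num.max (h x) (h x') ->
    exists k, [/\ (k < n)%N, `[< graph_column h w j `&` A k !=set0 >] & B k t].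
  move=> t_between.
  have hcxx' : {within `[x, x'], continuous h}.
    apply: continuous_subspaceW hc => z /=; rewrite !in_itv /= => /andP[? ?].
    by apply/andP; split; lra.
  have [c] := IVT xx' hcxx' t_between; rewrite in_itv /= => /andP[c_ge c_le] hct.
  have Gc : graph_column h w j (c, h c).
    by exists c; split => //; apply/andP; split; lra.
  have [|k kn Ak] := covA (c, h c).
    by exists c => //=; rewrite in_itv /=; apply/andP; split; lra.
  by exists k; split => //; [apply/asboolP; exists (c, h c) | exists (c, h c)].
have w20 : 0 <= 2 * w by rewrite mulr_ge0 // ltW.
rewrite /column_count; move: cover.
case: (lerP (h x) (h x')) => [|/ltW] hxx' cover;
  exact: (interval_cover_length w20 Bdiam hxx' cover).
Qed.

Lemma graph_column_coverable (h : R -> R) (w : R) j (N : nat) : 0 < w ->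
  (forall y y', 0 <= y <= 1 -> 0 <= y' <= 1 -> column w j y -> column w j y' ->
    `|h y - h y'| <= N%:R * w) ->
  coverable (graph_column h w j) (2 * w) (2 * N).+1.
Proof.
move=> w0 osc.
have [[y0 [y0_01 cy0]]|empty] := pselect (exists y, 0 <= y <= 1 /\ column w j y);
  last first.
  apply: (coverableS _ (coverable_leq (leq0n _) (coverable0 _))).
  by move=> z [y [y01 cy _]]; apply: empty; exists y.
pose lo := h y0 - N%:R * w.
exists (fun k => [set z | column w j z.1 /\ lo + k%:R * w <= z.2 <= lo + k.+1%:R * w]).
split.
  move=> k _ p q [/andP[p1 p2] /andP[p3 p4]] [/andP[q1 q2] /andP[q3 q4]].
  rewrite -natr1 mulrDl mul1r in p2 q2 p4 q4.
  by apply: dist2_le; rewrite ler_norml; apply/andP; split; lra.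
move=> z [y [y01 cy ->]].
have [|k kN hk] := @itv_grid_cell lo w (h y) (2 * N) w0.
  move: (osc _ _ y01 y0_01 cy cy0); rewrite ler_norml /lo natrM => /andP.
  by move=> [? ?]; apply/andP; split; lra.
by exists k => //; split.
Qed.

Lemma sum_column_count_le (h : R -> R) (A : nat -> set (R * R)) n (w : R) J :
  0 < w -> (forall k, (k < n)%N -> diam_le (A k) (2 * w)) ->
  (\sum_(j < J) column_count h A n w j <= 7 * n)%N.
Proof.
move=> w0 HA; rewrite /column_count exchange_big /=.
apply: (@leq_trans (\sum_(k < n) 7)); last by rewrite sum_nat_const card_ord mulnC.
by apply: leq_sum => k _; apply: diam_le_column_meets w0 (HA k (ltn_ord k)).
Qed.

Lemma graph_coverable_of_lipschitz (m : nat) (f : 'I_m -> R -> R) (r : R -> R)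
    (K : nat) (δ : R) (n : 'I_m -> nat) :
  (0 < m)%N -> (forall i, {within `[0, 1], continuous (f i)}) ->
  (forall x x', 0 <= x <= 1 -> 0 <= x' <= 1 ->
     `|r x - r x'| <= K%:R * \sum_i `|f i x - f i x'|) ->
  0 < δ -> (forall i, coverable (graph (f i)) δ (n i)) ->
  coverable (graph r) δ (7 * (4 * K + 1) * \sum_i n i).
Proof.
move=> m0 hf hK d0 hn; have [A HA] := choice hn.
pose w := δ / 2; have w0 : 0 < w by rewrite divr_gt0.
have d2w : δ = 2 * w by rewrite /w; field.
rewrite d2w in HA.
pose S j := (\sum_i column_count (f i) (A i) (n i) w j)%N.
have osc j x x' : 0 <= x <= 1 -> 0 <= x' <= 1 -> column w j x -> column w j x' ->
    `|r x - r x'| <= (2 * (K * S j))%:R * w.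
  move=> x01 x'01 cx cx'; apply: le_trans (hK _ _ x01 x'01) _.
  have -> : (2 * (K * S j))%:R * w = K%:R * ((S j)%:R * (2 * w)) by rewrite !natrM; ring.
  rewrite ler_wpM2l // natr_sum mulr_suml; apply: ler_sum => i _.
  by have [HA1 HA2] := HA i; apply: column_oscillation.
have colcov j : coverable (graph_column r w j) δ ((4 * K + 1) * S j).
  have [S0|Spos] := posnP (S j).
    apply: (coverableS _ (coverable_leq (leq0n _) (coverable0 _))).
    move=> z [y [y01 cy _]]; have [_ HA2] := HA (Ordinal m0).
    have := column_count_gt0 HA2 y01 cy.
    by move: S0; rewrite /S (bigD1 (Ordinal m0)) //=; lia.
  rewrite d2w; apply: coverable_leq (graph_column_coverable w0 (osc j)); nia.
have [J GJ] := graph_sub_columns r w0.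
apply: coverableS GJ (coverable_leq _ (coverable_bigcup (fun j _ => colcov j))).
rewrite -big_distrr /= mulnC [in leqRHS]mulnAC leq_pmul2r ?addn1 //.
rewrite /S exchange_big big_distrr /=; apply: leq_sum => i _.
by have [HA1 _] := HA i; apply: sum_column_count_le.
Qed.

End Columns.

Section BoxLipschitz.
Variables (R : realType) (m : nat) (B : R).
Hypothesis B0 : 0 <= B.

Definition in_box (y : 'I_m -> R) := forall i, `|y i| <= B.

Definition box_lipschitz (phi : ('I_m -> R) -> R) := exists K : R, 0 <= K /\
  forall y z, in_box y -> in_box z -> `|phi y - phi z| <= K * \sum_i `|y i - z i|.

Lemma in_box0 : in_box (fun _ => 0).
Proof. by move=> i; rewrite normr0. Qed.

Lemma box_lipschitz_ext phi psi : phi =1 psi -> box_lipschitz phi -> box_lipschitz psi.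
Proof. by move=> e [K [K0 H]]; exists K; split => // y z hy hz; rewrite -!e; apply: H. Qed.

Lemma box_lipschitz_bounded phi : box_lipschitz phi ->
  exists M, forall y, in_box y -> `|phi y| <= M.
Proof.
move=> [K [K0 H]]; exists (`|phi (fun _ => 0)| + K * (m%:R * B)) => y hy.
have hd := H _ _ hy in_box0.
have hs : \sum_i `|y i - 0| <= m%:R * B.
  apply: le_trans (_ : \sum_(i < m) B <= _).
    by apply: ler_sum => i _; rewrite subr0.
  by rewrite sumr_const card_ord mulr_natl.
have := ler_wpM2l K0 hs; have := lerB_dist (phi y) (phi (fun _ => 0)).
by move: (normr_ge0 (phi y)); lra.
Qed.

Lemma box_lipschitz_cst c : box_lipschitz (fun _ => c).
Proof. by exists 0; split => // y z _ _; rewrite subrr normr0 mul0r. Qed.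

Lemma box_lipschitz_proj i0 : box_lipschitz (fun y => y i0).
Proof.
exists 1; split => // y z _ _; rewrite mul1r (bigD1 i0) //= lerDl.
by apply: sumr_ge0 => i _.
Qed.

Lemma box_lipschitzD phi psi : box_lipschitz phi -> box_lipschitz psi ->
  box_lipschitz (fun y => phi y + psi y).
Proof.
move=> [K1 [K10 H1]] [K2 [K20 H2]]; exists (K1 + K2); split; first exact: addr_ge0.
move=> y z hy hz; have := H1 _ _ hy hz; have := H2 _ _ hy hz.
have := ler_normD (phi y - phi z) (psi y - psi z).
have -> : phi y - phi z + (psi y - psi z) = phi y + psi y - (phi z + psi z) by ring.
by rewrite mulrDl; lra.
Qed.

Lemma box_lipschitzM phi psi : box_lipschitz phi -> box_lipschitz psi ->
  box_lipschitz (fun y => phi y * psi y).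
Proof.
move=> Lphi Lpsi; have [M1 hM1] := box_lipschitz_bounded Lphi.
have [M2 hM2] := box_lipschitz_bounded Lpsi.
move: Lphi Lpsi => [K1 [K10 H1]] [K2 [K20 H2]].
have M10 : 0 <= M1 := le_trans (normr_ge0 _) (hM1 _ in_box0).
have M20 : 0 <= M2 := le_trans (normr_ge0 _) (hM2 _ in_box0).
exists (M1 * K2 + M2 * K1); split; first by rewrite addr_ge0 // mulr_ge0.
move=> y z hy hz.
have -> : phi y * psi y - phi z * psi z =
    phi y * (psi y - psi z) + psi z * (phi y - phi z) by ring.
apply: le_trans (ler_normD _ _) _; rewrite !normrM mulrDl -!mulrA.
by apply: lerD; apply: ler_pM => //; [apply: hM1 | apply: H2 | apply: hM2 | apply: H1].
Qed.

Lemma box_lipschitz_sum (T : Type) (s : seq T) (F : T -> ('I_m -> R) -> R) :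
  (forall t, box_lipschitz (F t)) -> box_lipschitz (fun y => \sum_(t <- s) F t y).
Proof.
move=> LF; elim: s => [|t s IH].
  by apply: box_lipschitz_ext (box_lipschitz_cst 0) => y; rewrite big_nil.
by apply: box_lipschitz_ext (box_lipschitzD (LF t) IH) => y; rewrite big_cons.
Qed.

Lemma box_lipschitz_prod (T : Type) (s : seq T) (F : T -> ('I_m -> R) -> R) :
  (forall t, box_lipschitz (F t)) -> box_lipschitz (fun y => \prod_(t <- s) F t y).
Proof.
move=> LF; elim: s => [|t s IH].
  by apply: box_lipschitz_ext (box_lipschitz_cst 1) => y; rewrite big_nil.
by apply: box_lipschitz_ext (box_lipschitzM (LF t) IH) => y; rewrite big_cons.
Qed.

Lemma box_lipschitzX i0 k : box_lipschitz (fun y => y i0 ^+ k).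
Proof.
elim: k => [|k IH].
  by apply: box_lipschitz_ext (box_lipschitz_cst 1) => y; rewrite expr0.
by apply: box_lipschitz_ext (box_lipschitzM (box_lipschitz_proj i0) IH) => y; rewrite exprS.
Qed.

Lemma meval_box_lipschitz (p : mpoly.mpoly m R) : box_lipschitz (fun y => mpoly.meval y p).
Proof.
apply: box_lipschitz_ext (fun y => esym (mpoly.mevalE y p)) _.
apply: box_lipschitz_sum => mon; apply: box_lipschitzM; first exact: box_lipschitz_cst.
by apply: box_lipschitz_prod => i; apply: box_lipschitzX.
Qed.

End BoxLipschitz.

Section BoxRatio.
Variable R : realType.
Implicit Types (F : set (R * R)) (d e : R).

Lemma ln_nat_le (N n : nat) : (N <= n)%N -> ln (N%:R : R) <= ln n%:R.
Proof.
case: N => [|N] Nn.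
  case: n Nn => [_|n _]; first exact: lexx.
  by rewrite ln0 //; apply: ln_ge0; rewrite ler1n.
by rewrite ler_ln ?posrE ?ltr0n ?ler_nat //; lia.
Qed.

Lemma Ndelta_coverable F d n : coverable F d n ->
  exists N, [/\ coverable F d N, (N <= n)%N & Ndelta F d = (N%:R)%:E].
Proof.
move=> cn; have ex : exists k, `[< coverable F d k >] by exists n; apply/asboolP.
case: (ex_minnP ex) => N /asboolP cN minN; exists N; split => //.
  by apply: minN; apply/asboolP.
apply/le_anti/andP; split; first by apply: ereal_inf_lbound; exists N.
by apply/ereal_infP => _ [k /asboolP ck <-]; rewrite lee_fin ler_nat minN.
Qed.

Lemma box_ratio_le_coverable F d e n : 0 < d < 1 ->
  coverable F d n -> ln n%:R <= e * - ln d -> (box_ratio F d <= e%:E)%E.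
Proof.
move=> d01 cn hn; have [N [_ Nn eN]] := Ndelta_coverable cn.
rewrite /box_ratio eN lee_fin ler_pdivrMr ?oppr_gt0 ?ln_lt0 //.
exact: le_trans (ln_nat_le Nn) hn.
Qed.

Lemma box_ratio_lt_coverable F d e : 0 < d < 1 ->
  (box_ratio F d < e%:E)%E -> exists n, coverable F d n /\ ln n%:R < e * - ln d.
Proof.
move=> d01; have [[n cn]|none] := pselect (exists n, coverable F d n).
  have [N [cN _ eN]] := Ndelta_coverable cn.
  by rewrite /box_ratio eN lte_fin ltr_pdivrMr ?oppr_gt0 ?ln_lt0 // => hN; exists N.
rewrite /box_ratio; suff -> : Ndelta F d = +oo%E by [].
by apply/ereal_inf_pinfty => y [k ck _]; case: none; exists k.
Qed.

Lemma div_ln_le_near0 (c eta : R) : 0 < eta -> \forall d \near 0^'+, c / - ln d <= eta.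
Proof.
move=> eta0; near=> d.
have d0 : 0 < d by near: d; exact: nbhs_right_gt.
have d1 : d < 1 by near: d; exact: nbhs_right_lt ltr01.
have d_lt : d < expR (- (c / eta)) by near: d; exact: nbhs_right_lt (expR_gt0 _).
have L0 : 0 < - ln d by rewrite oppr_gt0 ln_lt0 // d0 d1.
have : ln d < - (c / eta) by rewrite -(expRK (- (c / eta))) ltr_ln ?posrE ?expR_gt0.
by move=> h; rewrite ler_pdivrMr // mulrC -ler_pdivrMr //; lra.
Unshelve. all: by end_near.
Qed.

Lemma box_ratio_graph_le (m : nat) (f : 'I_m -> R -> R) (r : R -> R) (K : nat) d e :
  (0 < m)%N -> (forall i, {within `[0, 1], continuous (f i)}) ->
  (forall x x', 0 <= x <= 1 -> 0 <= x' <= 1 ->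
     `|r x - r x'| <= K%:R * \sum_i `|f i x - f i x'|) ->
  0 < d < 1 -> (forall i, (box_ratio (graph (f i)) d < e%:E)%E) ->
  (box_ratio (graph r) d <= (e + ln (7 * (4 * K + 1) * m)%N%:R / - ln d)%:E)%E.
Proof.
move=> m0 hf hK d01 hi; have /andP[d0 d1] := d01.
have L0 : 0 < - ln d by rewrite oppr_gt0 ln_lt0.
have [n hn] := choice (fun i => box_ratio_lt_coverable d01 (hi i)).
apply: box_ratio_le_coverable d01
  (graph_coverable_of_lipschitz m0 hf hK d0 (fun i => (hn i).1)) _.
set C := (7 * (4 * K + 1))%N.
have n_gt0 i : (0 < n i)%N by apply: coverable_graph_gt0 (hn i).1.
have n_le i : (n i)%:R <= expR (e * - ln d).
  by rewrite -[leLHS]lnK ?posrE ?ltr0n // ler_expR ltW // (hn i).2.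
have sum_le : (C * \sum_i n i)%N%:R <= (C * m)%N%:R * expR (e * - ln d).
  rewrite (natrM _ C) (natrM _ C m) -mulrA ler_wpM2l // natr_sum mulr_natl.
  by rewrite -[in leRHS](card_ord m) -sumr_const; apply: ler_sum.
have CS0 : (0 < C * \sum_i n i)%N.
  by rewrite /C (bigD1 (Ordinal m0)) //=; have := n_gt0 (Ordinal m0); nia.
have Cm0 : (0 < C * m)%N by rewrite /C; lia.
apply: le_trans (_ : ln ((C * m)%N%:R * expR (e * - ln d)) <= _).
  by rewrite ler_ln ?posrE ?mulr_gt0 ?ltr0n ?expR_gt0.
by rewrite lnM ?posrE ?ltr0n ?expR_gt0 // expRK mulrDl divfK ?gt_eqF // addrC.
Qed.

End BoxRatio.

Section LimSup.
Context {T : choiceType} {X : filteredType T} {R : realType}.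
Context (F : set_system X) {FF : Filter F}.
Local Open Scope ereal_scope.

Lemma limf_esup_le_near (f : X -> \bar R) e :
  (\forall x \near F, f x <= e) -> limf_esup f F <= e.
Proof.
move=> fe; apply: le_trans (ereal_inf_lbound _) _; first by exists [set x | f x <= e].
by apply: ge_ereal_sup => _ [x fxe <-].
Qed.

Lemma limf_esup_lt_near (f : X -> \bar R) e :
  limf_esup f F < e -> \forall x \near F, f x < e.
Proof.
move=> /ereal_inf_lt [_ [V FV <-] supVe]; apply: filterS FV => x Vx.
by apply: le_lt_trans supVe; apply: ereal_sup_ubound; exists x.
Qed.

Lemma lee_gt_fin (x M : \bar R) : (forall e : R, M < e%:E -> x <= e%:E) -> x <= M.
Proof.
case: M => [M| |] xM; last 2 first.
- by rewrite leey.
- case: x xM => [x| |] xM.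
  + suff : (x <= x - 1)%R by move=> ?; exfalso; lra.
    by rewrite -lee_fin xM // ltNyr.
  + by have := xM 0%R (ltNyr _).
  + by [].
by apply/lee_addgt0Pr => eta eta0; rewrite -EFinD xM // lte_fin ltrDl.
Qed.

Lemma limf_esup_le_bigmax (m : nat) (g : 'I_m -> X -> \bar R) (h : X -> \bar R) :
  (forall eta : R, (0 < eta)%R -> forall e : R,
    \forall x \near F, (forall i, g i x < e%:E) -> h x <= (e + eta)%:E) ->
  limf_esup h F <= \big[Order.max/-oo]_(i < m) limf_esup (g i) F.
Proof.
move=> hg; apply: lee_gt_fin => e Me; apply/lee_addgt0Pr => eta eta0.
rewrite -EFinD; apply: limf_esup_le_near.
have gi_lt : \forall x \near F, forall i, g i x < e%:E.
  apply: filter_forall => i; apply: limf_esup_lt_near.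
  exact: le_lt_trans (le_bigmax _ _ i) Me.
by apply: filterS2 gi_lt (hg eta eta0 e) => x gx; apply.
Qed.

End LimSup.

Section Polynomial.
Variable R : realType.

Lemma continuous01_bounded (h : R -> R) : {within `[0, 1], continuous h} ->
  exists B, 0 <= B /\ forall x, 0 <= x <= 1 -> `|h x| <= B.
Proof.
move=> hc; have [c1 _ hmax] := EVT_max ler01 hc; have [c2 _ hmin] := EVT_min ler01 hc.
exists (`|h c1| + `|h c2|); split; first by rewrite addr_ge0.
move=> x x01; have /hmax hx1 : x \in `[0, 1]%R by rewrite in_itv.
have /hmin hx2 : x \in `[0, 1]%R by rewrite in_itv.
have := ler_norm (h c1); have := ler_norm (- h c2); rewrite normrN.
by rewrite ler_norml; move: (normr_ge0 (h c1)) (normr_ge0 (h c2)) => *; apply/andP; split; lra.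
Qed.

Lemma meval_comp_lipschitz (m : nat) (f : 'I_m -> R -> R) (p : mpoly.mpoly m R) :
  (forall i, {within `[0, 1], continuous (f i)}) ->
  exists K : nat, forall x x', 0 <= x <= 1 -> 0 <= x' <= 1 ->
    `|mpoly.meval (fun i => f i x) p - mpoly.meval (fun i => f i x') p|
      <= K%:R * \sum_i `|f i x - f i x'|.
Proof.
move=> hf; have [Bf HBf] := choice (fun i => continuous01_bounded (hf i)).
pose B := \sum_i Bf i.
have Bf0 i : 0 <= Bf i by case: (HBf i).
have fB x : 0 <= x <= 1 -> in_box B (fun i => f i x).
  move=> x01 i; apply: le_trans ((HBf i).2 x x01) _.
  by rewrite /B (bigD1 i) //= lerDl sumr_ge0.
have B0 : 0 <= B by apply: sumr_ge0.
have [K [K0 HK]] := meval_box_lipschitz B0 p.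
exists (Num.truncn K).+1 => x x' x01 x'01.
apply: le_trans (HK _ _ (fB x x01) (fB x' x'01)) _.
by rewrite ler_wpM2r ?sumr_ge0 // ltW // truncnS_gt.
Qed.

End Polynomial.

Theorem mainTheorem8 (R : realType) (m : nat) (f : 'I_m -> R -> R)
  (hm : (0 < m)%N)
  (hf : forall i, {within `[0, 1]%classic, continuous (f i)})
  (p : mpoly.mpoly m R) :
  (upper_box_dim (graph (fun x => mpoly.meval (fun i => f i x) p))
   <= \big[Order.max/-oo]_(i < m) upper_box_dim (graph (f i)))%E.
Proof.
have [K hK] := meval_comp_lipschitz p hf.
apply: limf_esup_le_bigmax => eta eta0 e.
near=> d => ratio_lt.
have d01 : 0 < d < 1.
  by apply/andP; split; near: d; [exact: nbhs_right_gt | exact: nbhs_right_lt ltr01].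
apply: le_trans (box_ratio_graph_le hm hf hK d01 ratio_lt) _.
by rewrite lee_fin lerD2l; near: d; exact: div_ln_le_near0.
Unshelve. all: by end_near.
Qed.
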